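(* Let $s,t_0\ge 2$ be integers. Then for all integers $t\ge t_0$, $$g_{s,t}\le\left(t - t_0 + g_{s,t_0}^{1/(1-s)}\right)^{1-s}.$$ In particular, if $g_{s,t_0} < (t_0-1)^{1-s}$, then $g_{s,t} < (t-1)^{1-s}$ for all $t\ge t_0$.
   Context: For a graph $G$, $k_t(G)$ is the number of cliques on $t$ vertices in $G$ and $\overline{G}$ is the complement. Let $k'_{s,t}(n) = \min\{k_s(\overline{G}) : |V(G)| = n,\ k_t(G) = 0\}$, the minimum number of independent sets of size $s$ in an $n$-vertex graph with no clique of size $t$, and $g_{s,t} = \lim_{n\to\infty}k'_{s,t}(n)/\binom{n}{s}$ (this limit exists and is positive for $s,t\ge 2$). *)

From HB Require Import structures.
From mathcomp Require Import all_boot all_order all_algebra.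
From mathcomp Require Import all_classical all_reals all_analysis.
Set Implicit Arguments. Unset Strict Implicit. Unset Printing Implicit Defensive.
Import Order.TTheory GRing.Theory Num.Theory.
Import numFieldNormedType.Exports.
Local Open Scope ring_scope.

(* A simple graph on vertex set 'I_n is given by its edge set
   E : {set {set 'I_n}}; x,y (x != y) are adjacent iff [set x; y] \in E.
   (Members of E that are not 2-subsets are irrelevant.) *)

Definition is_clique n (E : {set {set 'I_n}}) (S : {set 'I_n}) : bool :=
  [forall x in S, forall y in S, (x != y) ==> ([set x; y] \in E)].

Definition is_indep n (E : {set {set 'I_n}}) (S : {set 'I_n}) : bool :=
  [forall x in S, forall y in S, (x != y) ==> ([set x; y] \notin E)].

Definition kclique n (E : {set {set 'I_n}}) (t : nat) : nat :=
  #|[set S : {set 'I_n} | (#|S| == t) && is_clique E S]|.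

Definition kindep n (E : {set {set 'I_n}}) (s : nat) : nat :=
  #|[set S : {set 'I_n} | (#|S| == s) && is_indep E S]|.

(* k'_{s,t}(n): min of k_s(complement G) over n-vertex G with k_t(G) = 0.
   The default 'C(n,s) is an upper bound for every k_s, and for t >= 2 the
   empty graph is admissible, so this is the true minimum. *)
Definition kprime (s t n : nat) : nat :=
  \big[minn/'C(n, s)]_(E : {set {set 'I_n}} | kclique E t == 0) kindep E s.

Local Open Scope classical_set_scope.
Definition gst (R : realType) (s t : nat) : R :=
  limn (fun n : nat => (kprime s t n)%:R / ('C(n, s))%:R : R).

(* Let a_t(n) = k'_{s,t}(n) / C(n,s).  Deleting a vertex from an optimal K_t-free
   graph on n+1 vertices and averaging over the deleted vertex shows that a_t(n)
   is nondecreasing in n, so g_{s,t} = sup_n a_t(n).  Joining an optimal K_t-free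
   graph on m vertices to k new pairwise non-adjacent vertices gives a
   K_{t+1}-free graph with at most k'_{s,t}(m) + C(k,s) independent s-sets;
   taking m ~ a n and letting n grow yields
     g_{s,t+1} <= g_{s,t} a^s + (1 - a)^s   for every a in [0,1].
   If g_{s,t} <= d^{1-s}, the choice a = d/(d+1) gives g_{s,t+1} <= (d+1)^{1-s},
   and iterating from d = g_{s,t0}^{1/(1-s)} gives the bound.  The strict form
   follows since x |-> x^{1-s} is decreasing and g_{s,t} is nonincreasing in t. *)

From HB Require Import structures.
From mathcomp Require Import all_boot all_order all_algebra.
From mathcomp Require Import zify ring lra.
Import Order.TTheory GRing.Theory Num.Theory.

Set Implicit Arguments.
Unset Strict Implicit.
Unset Printing Implicit Defensive.

Lemma imset_preimset (aT rT : finType) (f : aT -> rT) (S : {set rT}) :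
  S \subset f @: setT -> f @: (f @^-1: S) = S.
Proof.
move=> /subsetP Sf; apply/setP => y; apply/imsetP/idP => [[x + ->]|yS].
  by rewrite inE.
by have /imsetP[x _ ey] := Sf y yS; exists x; rewrite // inE -ey.
Qed.

Lemma imset_lift_setT n (v : 'I_n.+1) : lift v @: setT = [set~ v].
Proof.
apply/setP => y; rewrite in_setC1; apply/imsetP/idP => [[j _ ->]|].
  by rewrite eq_sym neq_lift.
by case: (unliftP v y) => [j -> _|->]; [exists j; rewrite ?inE | rewrite eqxx].
Qed.

Lemma sum_card_exchange (T U : finType) (B : {pred U}) (r : T -> U -> bool) :
  \sum_(x : T) #|[set y in B | r x y]| = \sum_(y in B) #|[set x | r x y]|.
Proof.
have cardE (V : finType) (q : pred V) : #|[set x | q x]| = \sum_x q x.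
  by rewrite -sum1dep_card big_mkcond; apply: eq_bigr => x _; case: (q x).
under eq_bigr do rewrite cardE; rewrite exchange_big /= [RHS]big_mkcond.
apply: eq_bigr => y _.
by case: (y \in B); rewrite /= ?big1_eq // (cardE _ (r^~ y)).
Qed.

Section Cliques.
Variables (n : nat) (E : {set {set 'I_n}}).

Lemma is_clique_subset (S T : {set 'I_n}) :
  T \subset S -> is_clique E S -> is_clique E T.
Proof.
move=> /subsetP TS cS; apply/forall_inP => x xT; apply/forall_inP => y yT.
exact: (forall_inP (forall_inP cS x (TS x xT)) y (TS y yT)).
Qed.

Lemma kclique_eq0P t :
  reflect (forall S : {set 'I_n}, is_clique E S -> #|S| != t) (kclique E t == 0).
Proof.
rewrite cards_eq0; apply: (iffP eqP) => [noK S cS | noK].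
  apply/eqP => St; have : S \in set0 by rewrite -noK inE St eqxx cS.
  by rewrite inE.
apply/setP => S; rewrite !inE; apply/negbTE; rewrite negb_and.
by case: (boolP (is_clique E S)) => [/noK -> | ]; rewrite ?orbT.
Qed.

Lemma clique_card_lt t (S : {set 'I_n}) :
  kclique E t == 0 -> is_clique E S -> #|S| < t.
Proof.
move=> /kclique_eq0P noK cS; rewrite ltnNge; apply/negP => tS.
have : 0 < #|[set T : {set 'I_n} | T \subset S & #|T| == t]|.
  by rewrite cards_draws bin_gt0.
case/card_gt0P => T; rewrite inE => /andP[TS /eqP Tt].
by move: (noK T (is_clique_subset TS cS)); rewrite Tt eqxx.
Qed.

Lemma kindep_le_bin s : kindep E s <= 'C(n, s).
Proof.
rewrite -[n in 'C(n, _)]card_ord -card_draws.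
by apply/subset_leq_card/subsetP => S; rewrite !inE => /andP[].
Qed.

End Cliques.

Lemma kclique_set0 n t : 1 < t -> kclique (set0 : {set {set 'I_n}}) t == 0.
Proof.
move=> t_gt1; apply/kclique_eq0P => S cS; apply/eqP => St.
have /card_gt1P[x [y [xS yS xy]]] : 1 < #|S| by rewrite St.
by move: (forall_inP (forall_inP cS x xS) y yS); rewrite xy inE.
Qed.

Lemma kindep_set0 n s : kindep (set0 : {set {set 'I_n}}) s = 'C(n, s).
Proof.
rewrite -[n in 'C(n, _)]card_ord -card_draws; apply: eq_card => S; rewrite !inE.
suff -> : is_indep set0 S by rewrite andbT.
by apply/forall_inP => x _; apply/forall_inP => y _; rewrite inE implybT.
Qed.

Lemma kprime_le_bin s t n : kprime s t n <= 'C(n, s).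
Proof.
rewrite /kprime; elim/big_ind: _ => // [x y|E _]; last exact: kindep_le_bin.
by rewrite geq_min => ->.
Qed.

Lemma kprime_le_kindep s t n (E : {set {set 'I_n}}) :
  kclique E t == 0 -> kprime s t n <= kindep E s.
Proof.
move=> Efree; rewrite /kprime -minEnat.
exact: (bigmin_le_cond _ (fun F => kindep F s) Efree).
Qed.

Lemma kprime_attained s t n : 1 < t ->
  exists2 E : {set {set 'I_n}}, kclique E t == 0 & kprime s t n = kindep E s.
Proof.
move=> t_gt1; rewrite /kprime; elim/big_ind: _ => [|x y [E1 ? ->] [E2 ? ->]|E ?].
- by exists set0; rewrite ?kclique_set0 ?kindep_set0.
- by case: (leqP (kindep E1 s) (kindep E2 s)) => h;
    [exists E1 => //; apply/minn_idPl | exists E2 => //; apply/minn_idPr/ltnW].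
- by exists E.
Qed.

Section InducedEmbedding.
Variables (n m : nat) (f : 'I_n -> 'I_m).
Variables (F : {set {set 'I_n}}) (E : {set {set 'I_m}}).
Hypothesis f_inj : injective f.
Hypothesis f_edge : forall x y, ([set f x; f y] \in E) = ([set x; y] \in F).

Let pairwise_imset (P : {set 'I_m} -> bool) (Q : {set 'I_n} -> bool) :
  (forall x y, P [set f x; f y] = Q [set x; y]) -> forall S : {set 'I_n},
  [forall x in f @: S, forall y in f @: S, (x != y) ==> P [set x; y]] =
  [forall x in S, forall y in S, (x != y) ==> Q [set x; y]].
Proof.
move=> PQ S; apply/forall_inP/forall_inP => [PS x xS | QS _ /imsetP[x xS ->]].
  apply/forall_inP => y yS.
  move: (forall_inP (PS _ (imset_f f xS)) _ (imset_f f yS)).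
  by rewrite (inj_eq f_inj) PQ.
apply/forall_inP => _ /imsetP[y yS ->]; rewrite (inj_eq f_inj) PQ.
exact: (forall_inP (QS x xS) y yS).
Qed.

Lemma is_clique_imset (S : {set 'I_n}) : is_clique E (f @: S) = is_clique F S.
Proof.
exact: (@pairwise_imset (fun e => e \in E) (fun e => e \in F) f_edge S).
Qed.

Lemma is_indep_imset (S : {set 'I_n}) : is_indep E (f @: S) = is_indep F S.
Proof.
have f_nonedge x y : ([set f x; f y] \notin E) = ([set x; y] \notin F).
  by rewrite f_edge.
exact: (@pairwise_imset (fun e => e \notin E) (fun e => e \notin F) f_nonedge S).
Qed.

Lemma kclique_le_imset t : kclique F t <= kclique E t.
Proof.
rewrite /kclique -(card_imset _ (imset_inj f_inj)).
apply/subset_leq_card/subsetP => _ /imsetP[S + ->].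
by rewrite !inE card_imset // is_clique_imset.
Qed.

Lemma kindep_imset s :
  kindep F s =
  #|[set S : {set 'I_m} | [&& #|S| == s, is_indep E S & S \subset f @: setT]]|.
Proof.
rewrite /kindep -(card_imset _ (imset_inj f_inj)); apply: eq_card => S.
rewrite inE; apply/imsetP/and3P => [[S0 + ->]|[Ss iS Sf]].
  rewrite inE card_imset // is_indep_imset => /andP[-> ->].
  by rewrite imsetS ?subsetT.
exists (f @^-1: S); last by rewrite imset_preimset.
by rewrite inE -is_indep_imset -(card_imset _ f_inj) imset_preimset // Ss iS.
Qed.

End InducedEmbedding.

Definition pullback_graph n m (f : 'I_n -> 'I_m) (E : {set {set 'I_m}}) :
  {set {set 'I_n}} := [set S : {set 'I_n} | f @: S \in E].

Lemma pullback_graph_edge n m (f : 'I_n -> 'I_m) (E : {set {set 'I_m}}) x y :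
  ([set f x; f y] \in E) = ([set x; y] \in pullback_graph f E).
Proof. by rewrite inE imsetU1 imset_set1. Qed.

Lemma kprime_vertex_average s t n : 1 < t ->
  n.+1 * kprime s t n <= (n.+1 - s) * kprime s t n.+1.
Proof.
move=> t_gt1; have [E Efree ->] := kprime_attained s n.+1 t_gt1.
set I := [set S : {set 'I_n.+1} | (#|S| == s) && is_indep E S].
have del_v (v : 'I_n.+1) : kprime s t n <= #|[set S in I | v \notin S]|.
  have edge := pullback_graph_edge (lift v) E.
  have free : kclique (pullback_graph (lift v) E) t == 0.
    by rewrite -leqn0 -(eqP Efree) (kclique_le_imset (@lift_inj _ v) edge).
  rewrite (leq_trans (kprime_le_kindep s free)) //.
  rewrite (kindep_imset (@lift_inj _ v) edge) imset_lift_setT.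
  by apply/eq_leq/eq_card => S; rewrite !inE subsetC sub1set inE andbA.
(* Double count the pairs (v, S) with S in I and v outside S. *)
have -> : (n.+1 - s) * #|I| = \sum_(S in I) #|~: S|.
  rewrite mulnC -sum_nat_const; apply: eq_bigr => S.
  rewrite inE => /andP[/eqP Ss _].
  by have := cardsC S; rewrite card_ord Ss; lia.
rewrite -[in X in _ <= X]sum_card_exchange -[n.+1 in X in X <= _]card_ord.
by rewrite -sum_nat_const leq_sum.
Qed.

(* The join of E with k new vertices, pairwise non-adjacent and each adjacent to
   every old vertex. *)
Definition join_empty m k (E : {set {set 'I_m}}) : {set {set 'I_(m + k)}} :=
  [set P : {set 'I_(m + k)} |
    if P \subset lshift k @: setT then lshift k @^-1: P \in E
    else ~~ (P \subset ~: (lshift k @: setT))].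

Section JoinEmpty.
Variables (m k : nat) (E : {set {set 'I_m}}).
Let L := lshift k @: [set: 'I_m].
Let J := join_empty k E.

Lemma join_empty_edge_old x y :
  ([set lshift k x; lshift k y] \in J) = ([set x; y] \in E).
Proof.
rewrite inE subUset !sub1set !imset_f ?in_setT //=; congr (_ \in E).
by apply/setP => z; rewrite !inE !(inj_eq (@lshift_inj _ _)).
Qed.

Lemma join_empty_edge_new x y : x \in L -> y \notin L -> [set x; y] \in J.
Proof.
move=> xL yL; rewrite inE subUset !sub1set (negbTE yL) andbF.
by apply/subsetPn; exists x; rewrite ?set21 // inE negbK.
Qed.

Lemma join_empty_nonedge_new x y :
  x \notin L -> y \notin L -> [set x; y] \notin J.
Proof.
move=> xL yL; rewrite inE subUset !sub1set (negbTE xL) negbK.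
by rewrite subUset !sub1set !inE xL yL.
Qed.

Lemma card_join_empty_new : #|~: L| = k.
Proof.
have := cardsC L; rewrite card_imset ?cardsT ?card_ord; [lia | exact: lshift_inj].
Qed.

Lemma join_empty_kclique_free t : kclique E t == 0 -> kclique J t.+1 == 0.
Proof.
move=> Efree; apply/kclique_eq0P => S cS.
set S0 := lshift k @^-1: S.
have S0_clique : is_clique E S0.
  rewrite -(is_clique_imset (@lshift_inj m k) join_empty_edge_old).
  by apply: is_clique_subset cS; apply/subsetP => _ /imsetP[x + ->]; rewrite inE.
have old : #|S :&: L| <= #|S0|.
  rewrite -(card_imset _ (@lshift_inj m k)); apply/subset_leq_card/subsetP => x.
  by rewrite inE => /andP[xS /imsetP[i _ ei]]; rewrite ei imset_f // inE -ei.
have new : #|S :\: L| <= 1.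
  rewrite leqNgt; apply/negP => /card_gt1P[x [y [+ + xy]]].
  rewrite !inE => /andP[xL xS] /andP[yL yS].
  move: (forall_inP (forall_inP cS x xS) y yS).
  by rewrite xy (negbTE (join_empty_nonedge_new xL yL)).
rewrite -(cardsID L S) neq_ltn (leq_ltn_trans (leq_add old new)) //.
by rewrite addn1 ltnS (clique_card_lt Efree S0_clique).
Qed.

Lemma kindep_join_empty s : kindep J s <= kindep E s + 'C(k, s).
Proof.
have indep_split :
    [set S : {set 'I_(m + k)} | (#|S| == s) && is_indep J S] \subset
    [set S : {set 'I_(m + k)} | [&& #|S| == s, is_indep J S & S \subset L]] :|:
    [set S : {set 'I_(m + k)} | S \subset ~: L & #|S| == s].
  apply/subsetP => S; rewrite !inE => /andP[Ss iS]; rewrite Ss iS andbT /=.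
  case: (boolP (S \subset L)) => //= /subsetPn[x xS xL].
  apply/subsetP => y yS; rewrite inE; apply/negP => yL.
  move: (forall_inP (forall_inP iS y yS) x xS).
  rewrite (join_empty_edge_new yL xL) implybF negbK => /eqP yx.
  by rewrite -yx yL in xL.
rewrite /kindep (leq_trans (subset_leq_card indep_split)) //.
rewrite (leq_trans (leq_card_setU _ _)) // cards_draws card_join_empty_new.
by rewrite -(kindep_imset (@lshift_inj m k) join_empty_edge_old).
Qed.

End JoinEmpty.

Lemma kprime_join_empty s t m k : 1 < t ->
  kprime s t.+1 (m + k) <= kprime s t m + 'C(k, s).
Proof.
move=> t_gt1; have [E Efree ->] := kprime_attained s m t_gt1.
exact: leq_trans (kprime_le_kindep s (join_empty_kclique_free k Efree))
                 (kindep_join_empty k E s).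
Qed.

Lemma ffact_mul_expn_le m N s : m <= N -> m ^_ s * N ^ s <= N ^_ s * m ^ s.
Proof.
move=> mN; elim: s => [|s IHs]; first by rewrite !ffactn0 !expn0.
rewrite !ffactnSr !expnSr.
have step : (m - s) * N <= (N - s) * m by nia.
by have := leq_mul IHs step; nia.
Qed.

From mathcomp Require Import all_classical all_reals all_analysis.
Import numFieldNormedType.Exports.
Local Open Scope classical_set_scope.
Local Open Scope ring_scope.

Section Density.
Variable R : realType.

Definition kprime_density s t n : R := (kprime s t n)%:R / ('C(n, s))%:R.

Lemma kprime_density_le1 s t n : kprime_density s t n <= 1.
Proof.
rewrite /kprime_density; have [->|C_gt0] := posnP 'C(n, s).
  by rewrite invr0 mulr0.
by rewrite ler_pdivrMr ?ltr0n // mul1r ler_nat kprime_le_bin.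
Qed.

Lemma kprime_density_nondecreasing s t :
  (1 < t)%N -> nondecreasing_seq (kprime_density s t).
Proof.
move=> t_gt1; apply/nondecreasing_seqP => n; rewrite /kprime_density.
have [->|C_gt0] := posnP 'C(n, s); first by rewrite invr0 mulr0 divr_ge0.
have sn : (s <= n)%N by rewrite -bin_gt0.
rewrite ler_pdivrMr ?ltr0n // mulrAC ler_pdivlMr ?ltr0n ?bin_gt0 ?(leqW sn) //.
rewrite -!natrM ler_nat -(@leq_pmul2l (n.+1 - s)) ?subn_gt0 ?ltnS //.
have := kprime_vertex_average s n t_gt1; have /= := mul_bin_down n.+1 s.
by move=> bin_down avg; rewrite mulnCA -bin_down; nia.
Qed.

Lemma kprime_density_cvg s t : (1 < t)%N -> cvgn (kprime_density s t).
Proof.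
move=> t_gt1.
apply: nondecreasing_is_cvgn (kprime_density_nondecreasing s t_gt1) _.
by exists 1 => _ [n _ <-]; exact: kprime_density_le1.
Qed.

Lemma kprime_density_le_gst s t n :
  (1 < t)%N -> kprime_density s t n <= gst R s t.
Proof.
move=> t_gt1.
apply: nondecreasing_cvgn_le (kprime_density_nondecreasing s t_gt1) _ n.
exact: kprime_density_cvg.
Qed.

Lemma gst_ge0 s t : (1 < t)%N -> 0 <= gst R s t.
Proof.
move=> t_gt1; apply: le_trans (kprime_density_le_gst s 0 t_gt1).
by rewrite divr_ge0.
Qed.

Lemma kprime_le_gst_bin s t m : (1 < t)%N ->
  (kprime s t m)%:R <= gst R s t * ('C(m, s))%:R.
Proof.
move=> t_gt1; have [C0|C_gt0] := posnP 'C(m, s).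
  by move: (kprime_le_bin s t m); rewrite C0 leqn0 => /eqP ->; rewrite mulr0.
by rewrite -ler_pdivrMr ?ltr0n // (kprime_density_le_gst _ _ t_gt1).
Qed.

Lemma bin_ratio_le m N s : (m <= N)%N -> (s <= N)%N -> (0 < N)%N ->
  ('C(m, s))%:R / ('C(N, s))%:R <= ((m%:R / N%:R) ^+ s : R).
Proof.
move=> mN sN N_gt0; rewrite expr_div_n ler_pdivrMr ?ltr0n ?bin_gt0 // mulrAC.
rewrite ler_pdivlMr ?exprn_gt0 ?ltr0n // -!natrX -!natrM ler_nat.
rewrite -(@leq_pmul2r s`!) ?fact_gt0 //.
by have := ffact_mul_expn_le s mN; rewrite -!bin_ffact; nia.
Qed.

Lemma kprime_density_join_le s t m N : (1 < t)%N -> (m <= N)%N -> (s < N)%N ->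
  kprime_density s t.+1 N <=
  gst R s t * (m%:R / N%:R) ^+ s + ((N - m)%:R / N%:R) ^+ s.
Proof.
move=> t_gt1 mN sN; have N_gt0 : (0 < N)%N by apply: leq_ltn_trans sN.
have C_gt0 : (0 < 'C(N, s))%N by rewrite bin_gt0 ltnW.
have := kprime_join_empty s m (N - m) t_gt1; rewrite subnKC // => join.
rewrite /kprime_density ler_pdivrMr ?ltr0n //.
apply: le_trans (_ : (kprime s t m)%:R + ('C(N - m, s))%:R <= _).
  by rewrite -natrD ler_nat join.
rewrite mulrDl; apply: lerD; rewrite -ler_pdivrMr ?ltr0n //; last first.
  by rewrite bin_ratio_le ?leq_subr // ltnW.
apply: le_trans (_ : gst R s t * (('C(m, s))%:R / ('C(N, s))%:R) <= _).
  by rewrite mulrA ler_pM2r ?invr_gt0 ?ltr0n // kprime_le_gst_bin.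
by rewrite ler_wpM2l ?gst_ge0 ?bin_ratio_le // ltnW.
Qed.

Lemma kprime_density_succ_le s t (a : R) N : (1 < t)%N -> 0 <= a <= 1 ->
  (s <= N)%N ->
  kprime_density s t.+1 N.+1 <= gst R s t * a ^+ s + (1 - a + harmonic N) ^+ s.
Proof.
move=> t_gt1 /andP[a_ge0 a_le1] sN; have N1_gt0 : 0 < N.+1%:R :> R by [].
(* Keep m = floor(a (N + 1)) old vertices; the rounding costs at most
   harmonic N = 1 / (N + 1). *)
set m := Num.truncn (a * N.+1%:R).
have /andP[m_le m_gt] := truncn_itv (mulr_ge0 a_ge0 (ler0n R N.+1)).
have mN : (m <= N.+1)%N by rewrite -(ler_nat R) (le_trans m_le) // ler_piMl.
apply: le_trans (kprime_density_join_le t_gt1 mN sN) _; apply: lerD.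
  rewrite ler_wpM2l ?gst_ge0 //; apply: lerXn2r; rewrite ?nnegrE //.
  by rewrite ler_pdivrMr // mulrC.
have harmonic_ge0 : 0 <= harmonic N :> R by rewrite /harmonic /= invr_ge0.
apply: lerXn2r; rewrite ?nnegrE //; first lra.
rewrite natrB // ler_pdivrMr //.
have -> : (1 - a + harmonic N) * N.+1%:R = N.+1%:R - a * N.+1%:R + 1.
  by rewrite /harmonic /=; field; rewrite lt0r_neq0.
by rewrite -(natr1 m) in m_gt; lra.
Qed.

Lemma gst_succ_le s t (a : R) : (1 < t)%N -> 0 <= a <= 1 ->
  gst R s t.+1 <= gst R s t * a ^+ s + (1 - a) ^+ s.
Proof.
move=> t_gt1 a01; set g := gst R s t.
have bound_cvg : g * a ^+ s + (1 - a + harmonic N) ^+ s @[N --> \oo] -->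
                 g * a ^+ s + (1 - a) ^+ s.
  apply: cvgD; first exact: cvg_cst.
  apply: (continuous_cvg _ (@exprn_continuous R s _)).
  rewrite -[X in _ --> X]addr0.
  by apply: cvgD; [exact: cvg_cst | exact: cvg_harmonic].
rewrite -(cvg_lim _ bound_cvg) //; apply: ler_lim.
- exact: kprime_density_cvg (leqW t_gt1).
- exact: cvgP bound_cvg.
- exists s => // N /= sN.
  apply: le_trans (kprime_density_nondecreasing _ (leqW t_gt1) (leqnSn N)) _.
  exact: kprime_density_succ_le.
Qed.

Lemma powR1Bn_mul_exprn s (d : R) : (0 < s)%N -> 0 <= d ->
  powR d (1 - s%:R) * d ^+ s = d.
Proof.
move=> s_gt0 d_ge0; have [->|d_neq0] := eqVneq d 0.
  by rewrite expr0n gtn_eqF // mulr0.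
by rewrite -powR_mulrn // -powRD ?d_neq0 ?implybT // subrK powRr1.
Qed.

Lemma powR1BnE s (x : R) : 0 < x -> powR x (1 - s%:R) = x / x ^+ s.
Proof.
move=> x_gt0; rewrite powRB; last by apply/implyP => _; rewrite gt_eqF.
by rewrite powRr1 ?powR_mulrn // ltW.
Qed.

Lemma gst_succ_le_powR s t (d : R) : (1 < t)%N -> (0 < s)%N -> 0 <= d ->
  gst R s t <= powR d (1 - s%:R) -> gst R s t.+1 <= powR (d + 1) (1 - s%:R).
Proof.
move=> t_gt1 s_gt0 d_ge0 g_le; have d1_gt0 : 0 < d + 1 by lra.
have a01 : 0 <= d / (d + 1) <= 1.
  by rewrite divr_ge0 ?(ltW d1_gt0) //= ler_pdivrMr // mul1r lerDl.
apply: le_trans (gst_succ_le s t_gt1 a01) _.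
have -> : 1 - d / (d + 1) = (d + 1)^-1 by field; rewrite lt0r_neq0.
apply: le_trans
  (_ : powR d (1 - s%:R) * (d / (d + 1)) ^+ s + (d + 1)^-1 ^+ s <= _).
  by rewrite lerD2r ler_wpM2r // exprn_ge0 // divr_ge0 // ltW.
rewrite expr_div_n mulrA powR1Bn_mul_exprn // powR1BnE // exprVn.
by rewrite -[X in _ + X]mul1r -mulrDl.
Qed.

Lemma gst_succ_le_gst s t : (1 < t)%N -> (0 < s)%N -> gst R s t.+1 <= gst R s t.
Proof.
move=> t_gt1 s_gt0.
have := @gst_succ_le s t 1 t_gt1; rewrite ler01 lexx => /(_ isT).
by rewrite subrr expr1n mulr1 expr0n gtn_eqF // addr0.
Qed.

Lemma gst_addn_le_gst s t k : (1 < t)%N -> (0 < s)%N ->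
  gst R s (t + k) <= gst R s t.
Proof.
move=> t_gt1 s_gt0; elim: k => [|k IHk]; first by rewrite addn0.
rewrite addnS; apply: le_trans IHk; apply: gst_succ_le_gst s_gt0.
exact: leq_trans t_gt1 (leq_addr _ _).
Qed.

Lemma gst_addn_le_powR s t k (c : R) : (1 < t)%N -> (0 < s)%N -> 0 <= c ->
  gst R s t <= powR c (1 - s%:R) ->
  gst R s (t + k) <= powR (k%:R + c) (1 - s%:R).
Proof.
move=> t_gt1 s_gt0 c_ge0 g_le; elim: k => [|k IHk]; first by rewrite addn0 add0r.
rewrite addnS -natr1 addrAC; apply: gst_succ_le_powR IHk => //.
  exact: leq_trans t_gt1 (leq_addr _ _).
by rewrite addr_ge0.
Qed.

End Density.

Lemma lt0_gtr_powR (R : realType) (r : R) : r < 0 ->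
  {in Num.pos &, {homo (@powR R) ^~ r : x y /~ x < y}}.
Proof.
move=> r_lt0 x y; rewrite !posrE => x_gt0 y_gt0 xy.
rewrite -[r]opprK (powRN x) (powRN y) ltf_pV2 ?posrE ?powR_gt0 //.
by apply: gt0_ltr_powR; rewrite ?oppr_gt0 // nnegrE ltW.
Qed.

Lemma powR_div1rK (R : realType) (x e : R) : 0 <= x -> e != 0 ->
  powR (powR x (1 / e)) e = x.
Proof.
move=> x_ge0 e_neq0; have [->|x_neq0] := eqVneq x 0.
  by rewrite !powR0 // div1r invr_eq0.
by rewrite -powRrM div1r mulVf // powRr1.
Qed.

Unset Implicit Arguments.

Theorem proposition5p1 (R : realType) (s t0 : nat) :
  (2 <= s)%N -> (2 <= t0)%N ->
  (forall t : nat, (t0 <= t)%N ->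
     gst R s t <=
       powR ((t%:R - t0%:R) + powR (gst R s t0) (1 / (1 - s%:R))) (1 - s%:R))
  /\
  (gst R s t0 < powR (t0%:R - 1) (1 - s%:R) ->
     forall t : nat, (t0 <= t)%N -> gst R s t < powR (t%:R - 1) (1 - s%:R)).
Proof.
move=> s_gt1 t0_gt1; have s_gt0 : (0 < s)%N by apply: ltnW.
set e := 1 - s%:R; set g0 := gst R s t0; set c0 := powR g0 (1 / e).
have e_lt0 : e < 0 by rewrite subr_lt0 ltr1n.
have g0_ge0 : 0 <= g0 by apply: gst_ge0.
have g0E : powR c0 e = g0 by rewrite powR_div1rK // lt_eqF.
have bound k : gst R s (t0 + k) <= powR (k%:R + c0) e.
  by apply: gst_addn_le_powR; rewrite ?g0E ?powR_ge0.
have shift t : (t0 <= t)%N -> t = (t0 + (t - t0))%N by move=> /subnKC.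
split=> [t /shift -> | g0_lt t /shift ->]; rewrite natrD.
  by rewrite (addrC t0%:R) addrK.
set k := (t - t0)%N; have [g0_eq0 | g0_neq0] := eqVneq g0 0.
  apply: le_lt_trans (gst_addn_le_gst _ k t0_gt1 s_gt0) _.
  by rewrite -/g0 g0_eq0 powR_gt0 // -natrD subr_gt0 ltr1n ltn_addr.
have c0_gt0 : 0 < c0 by rewrite powR_gt0 // lt_neqAle eq_sym g0_neq0.
have t0_lt_c0 : t0%:R - 1 < c0.
  rewrite ltNge; apply: contraTN g0_lt => c0_le; rewrite -leNgt -g0E.
  by apply: (ltW_nhomo_in (lt0_gtr_powR e_lt0)) c0_le;
    rewrite posrE ?subr_gt0 ?ltr1n.
have k_ge0 : 0 <= k%:R :> R by [].
have t0_gt1R : 1 < t0%:R :> R by rewrite ltr1n.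
apply: le_lt_trans (bound k) _; apply: (lt0_gtr_powR e_lt0); rewrite ?posrE; lra.
Qed.
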